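(* There exist a Stackelberg game $(G,L,F)$ and an SCE-PA $\mathbf{x}=[x_\pi]\in\mathbf{X}^{SCE\text{-}PA}$ such that there is no SCE-PA $\mathbf{x}'=[x'_\pi]\in\mathbf{X}^{SCE\text{-}PA}$ with $x'_\varnothing=x_\varnothing$ and $x'_\pi=x'_{\pi'}$ for all $\pi,\pi'\in\Pi_L$ having the same set of entries.
   Context: A finite game is $G=(N,\{S_p\}_{p\in N},\{u_p\}_{p\in N})$ with players $N=\{1,\dots,n\}$, finite nonempty strategy sets $S_p$, and utilities $u_p:S\to\mathbb{R}$ on $S=\prod_{p\in N}S_p$; write $s=(s_p,s_{-p})$ with $s_{-p}\in S_{-p}=\prod_{q\neq p}S_q$. $\mathcal{X}=\Delta(S)$ is the set of probability distributions on $S$ and $u_p(x)=\sum_{s\in S}x(s)u_p(s)$ for $x\in\mathcal{X}$. For $P\subseteq N$, $\mathcal{X}^{CE}_P$ is the set of $x\in\mathcal{X}$ such that for every $p\in P$ and all $s_p\neq s_p'\in S_p$: $\sum_{s_{-p}\in S_{-p}} x(s_p,s_{-p})\,(u_p(s_p,s_{-p})-u_p(s_p',s_{-p}))\ge 0$; $\mathcal{X}^{CE}=\mathcal{X}^{CE}_N$ is the set of correlated equilibria of $G$. A Stackelberg game (SG) is a triple $(G,L,F)$ with $L\cup F=N$ and $L\cap F=\emptyset$ (leaders and followers). For $P\subseteq N$, $\Pi_P$ is the set of ordered subsets of $P$ (finite sequences of pairwise distinct elements of $P$, including the empty sequence $\varnothing$); for $\pi\in\Pi_P$ and $p\in P$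 not occurring in $\pi$, $\pi p$ is $\pi$ with $p$ appended; when used as a set, $\pi$ means its set of entries. $\mathbf{X}=\prod_{\pi\in\Pi_L}\mathcal{X}^{CE}_{\pi\cup F}$, with elements $\mathbf{x}=[x_\pi]_{\pi\in\Pi_L}$. For $\mathbf{x}\in\mathbf{X}$ and $\pi\in\Pi_L$, $x_\pi$ is stable if $u_p(x_\pi)\ge u_p(x_{\pi p})$ for all $p\in L\setminus\pi$; $\mathbf{x}$ is stable if $x_\varnothing$ is stable, and perfectly stable if $x_\pi$ is stable for every $\pi\in\Pi_L$; $\mathbf{X}^{S}$ and $\mathbf{X}^{PS}$ denote the sets of stable and perfectly stable elements of $\mathbf{X}$. For $\mathbf{X}'\subseteq\mathbf{X}$ and $\pi\in\Pi_L$, $\mathcal{P}_{L\setminus\pi}(\mathbf{X}')$ is the set of Pareto optimal elements of $\{x'_\pi:\mathbf{x}'\in\mathbf{X}'\}$ with respect to the objectives $u_p$, $p\in L\setminus\pi$ (an element $y$ of the set is Pareto optimal if no $y'$ in the set satisfies $u_p(y')\ge u_p(y)$ for all $p\in L\setminus\pi$ with strict inequality for some such $p$). $\mathbf{x}\in\mathbf{X}$ is an SCE-PA if $\mathbf{x}\in\mathbf{X}^{PS}$ and $x_\varnothing\in\mathcal{P}_L(\mathbf{X}^{PS})$; $\mathbf{X}^{SCE\text{-}PA}$ is the set of SCE-PAs. *)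

From Stdlib Require Import Reals.
From mathcomp Require Import all_boot.
Set Implicit Arguments. Unset Strict Implicit. Unset Printing Implicit Defensive.
Local Open Scope R_scope.

(* A finite game: players 'I_n, strategy set of player p is 'I_(m p)
   (finite, nonempty since 0 < m p), utilities u p : profile -> R. *)
Record game := Game {
  gn : nat;
  gm : 'I_gn -> nat;
  gm_pos : forall p, (0 < gm p)%N;
  gu : 'I_gn -> {dffun forall p : 'I_gn, 'I_(gm p)} -> R }.

Definition profile (G : game) := {dffun forall p : 'I_(gn G), 'I_(gm p)}.
Definition player (G : game) := 'I_(gn G).

Definition deviate (G : game) (s : profile G) (p : player G) (t : 'I_(gm p))
  : profile G := finfun (dfwith (fun q => s q) t).

Definition rsum (G : game) (f : profile G -> R) : R :=
  \big[Rplus/R0]_(s : profile G) f s.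

Definition is_dist (G : game) (x : {ffun profile G -> R}) : Prop :=
  (forall s, (0 <= x s)) /\ rsum (fun s => x s) = 1.

Definition eutil (G : game) (p : player G) (x : {ffun profile G -> R}) : R :=
  rsum (fun s => (x s * gu p s)).

Definition inCE (G : game) (P : {set player G}) (x : {ffun profile G -> R})
  : Prop :=
  is_dist x /\
  forall p, p \in P -> forall sp sp' : 'I_(gm p), sp <> sp' ->
    (0 <= rsum (fun s => if s p == sp
                         then (x s * (gu p s - gu p (deviate s sp')))
                         else 0)).

(* Pi_P : ordered subsets of P, as duplicate-free sequences with entries in P *)
Definition inPi (G : game) (P : {set player G}) (pi : seq (player G)) : bool :=
  uniq pi && all (fun p => p \in P) pi.

(* An element [x_pi]_{pi in Pi_L}; values at sequences outside Pi_L are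
   irrelevant (never inspected). *)
Definition collection (G : game) := seq (player G) -> {ffun profile G -> R}.

Definition followers (G : game) (L : {set player G}) := ~: L.

Definition inX (G : game) (L : {set player G}) (x : collection G) : Prop :=
  forall pi, inPi L pi -> inCE ([set p in pi] :|: followers L) (x pi).

Definition stable_at (G : game) (L : {set player G}) (x : collection G)
  (pi : seq (player G)) : Prop :=
  forall p, p \in L -> p \notin pi -> (eutil p (x (rcons pi p)) <= eutil p (x pi)).

Definition perfectly_stable (G : game) (L : {set player G}) (x : collection G)
  : Prop := forall pi, inPi L pi -> stable_at L x pi.

Definition pareto_opt (G : game) (L : {set player G})
  (Xp : collection G -> Prop) (pi : seq (player G)) (y : {ffun profile G -> R})
  : Prop :=
  (exists x', Xp x' /\ x' pi = y) /\
  ~ (exists x', Xp x' /\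
      (forall p, p \in L -> p \notin pi -> (eutil p y <= eutil p (x' pi))) /\
      (exists p, p \in L /\ p \notin pi /\ (eutil p y < eutil p (x' pi)))).

Definition X_PS (G : game) (L : {set player G}) (x : collection G) : Prop :=
  inX L x /\ perfectly_stable L x.

Definition SCE_PA (G : game) (L : {set player G}) (x : collection G) : Prop :=
  X_PS L x /\ pareto_opt L (X_PS L) [::] (x [::]).

(* All three players lead.  For every player strategy 1 is weakly dominated by
   strategy 0, so a correlated equilibrium puts no weight on a profile where switching
   a 1 to 0 strictly helps the switching player; for player 2 these are all profiles
   with a 1 in his coordinate, and the only correlated equilibrium of the whole game
   is the pure profile (0,0,0).

   The witness plays (1,1,1) at the root (it maximises the total utility 8, hence is
   Pareto optimal), (0,1,0) and (1,0,0) after leader 0 resp. leader 1 moves first, and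
   (0,1,1) and (1,0,1) after the orders 01 and 10.  In any perfectly stable collection
   with that root, a first mover gets at most -1, which its correlated equilibrium
   condition only allows at (0,1,0) resp. (1,0,0), where the other leader gets 0; so
   x_01 and x_10 give the second mover at most 0. If x_01 = x_10, it gives both
   leaders at most 0, which forces it to be (0,0,1); there player 2 gets -1 and
   prefers to commit, reaching (0,0,0). *)

From HB Require Import structures.
From Stdlib Require Import Reals Lra.
From mathcomp Require Import all_boot.
Set Implicit Arguments. Unset Strict Implicit. Unset Printing Implicit Defensive.
Local Open Scope R_scope.

Lemma Rplus_associative : associative Rplus.
Proof. by move=> x y z; rewrite Rplus_assoc. Qed.

HB.instance Definition _ :=
  Monoid.isComLaw.Build R R0 Rplus Rplus_associative Rplus_comm Rplus_0_l.

Section Games.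
Variable G : game.

Lemma rsum_le0_eq0 (f : profile G -> R) :
  (forall s, f s <= 0) -> 0 <= rsum f -> forall s, f s = 0.
Proof.
move=> f_le0 sum_ge0 s; rewrite /rsum (bigD1 s) // in sum_ge0.
move: sum_ge0; set rest := (X in _ <= _ + X) => sum_ge0.
have : rest <= 0.
  apply: (big_ind (fun r => r <= 0)) => [|x y ? ?|s' _]; last exact: f_le0.
    exact: Rle_refl.
  by rewrite /=; lra.
by have := f_le0 s; lra.
Qed.

Lemma rsum_supp1 (f : profile G -> R) (c : profile G) :
  (forall s, s != c -> f s = 0) -> rsum f = f c.
Proof. by move=> f0; rewrite /rsum (bigD1 c) //= big1 ?Rplus_0_r. Qed.

Definition weakly_dominates (p : player G) (t' t : 'I_(gm p)) : Prop :=
  forall s : profile G, s p = t -> gu p s <= gu p (deviate s t').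

Lemma inCE_dominated_weight0 (P : {set player G}) x (p : player G)
    (t t' : 'I_(gm p)) :
  inCE P x -> p \in P -> t <> t' -> weakly_dominates t' t ->
  forall s : profile G, s p = t -> gu p s < gu p (deviate s t') -> x s = 0.
Proof.
case=> [[x_ge0 _] ce] pP tt' dom s spt lt.
have terms_le0 (s' : profile G) :
    (if s' p == t then x s' * (gu p s' - gu p (deviate s' t')) else 0) <= 0.
  case: eqP => [/dom|_]; last exact: Rle_refl.
  by have := x_ge0 s'; nra.
have := rsum_le0_eq0 terms_le0 (ce p pP t t' tt') s.
by rewrite spt eqxx => /Rmult_integral [//|]; lra.
Qed.

Definition delta (c : profile G) : {ffun profile G -> R} :=
  [ffun s => if s == c then 1 else 0].

Lemma eutil_delta p c : eutil p (delta c) = gu p c.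
Proof.
rewrite /eutil (rsum_supp1 _ (c := c)) => [|s]; rewrite ffunE.
  by rewrite eqxx Rmult_1_l.
by move/negbTE->; rewrite Rmult_0_l.
Qed.

Definition best_response (p : player G) (c : profile G) : Prop :=
  forall t : 'I_(gm p), gu p (deviate c t) <= gu p c.

Lemma inCE_delta (P : {set player G}) c :
  (forall p, p \in P -> best_response p c) -> inCE P (delta c).
Proof.
move=> br; split; [split|].
- by move=> s; rewrite ffunE; case: eqP; lra.
- by rewrite (rsum_supp1 _ (c := c)) => [|s]; rewrite ffunE ?eqxx // => /negbTE->.
- move=> p pP sp sp' _; rewrite (rsum_supp1 _ (c := c)) => [|s].
    by rewrite ffunE eqxx; have := br p pP sp'; case: eqP; lra.
  by rewrite ffunE => /negbTE->; case: eqP; lra.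
Qed.

Lemma inPi_setT (pi : seq (player G)) : inPi [set: player G] pi = uniq pi.
Proof.
by rewrite /inPi; case: (uniq pi) => //=; apply/allP => p; rewrite in_setT.
Qed.

Lemma leaders_setT (pi : seq (player G)) :
  [set p in pi] :|: followers [set: player G] = [set p in pi].
Proof. by rewrite /followers setCT setU0. Qed.

End Games.

Definition payoffs (a b c : nat) : R * R * R :=
  match a, b, c with
  | O, O, O => (1, 1, 0)
  | O, O, _ => (0, 0, -1)
  | O, _, O => (-1, 0, 1)
  | O, _, _ => (1, 0, 0)
  | _, O, O => (0, -1, 1)
  | _, O, _ => (0, 1, 0)
  | _, _, O => (-2, -2, 11)
  | _, _, _ => (-1, -1, 10)
  end.

Definition payoff (p a b c : nat) : R :=
  let: (u0, u1, u2) := payoffs a b c in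
  match p with O => u0 | S O => u1 | _ => u2 end.

Arguments payoff p a b c /.

Definition two_strategies (p : 'I_3) : nat := 2.

Definition G3 : game := @Game 3 two_strategies (fun _ => isT)
  (fun p s => payoff p (s (@Ordinal 3 0 isT)) (s (@Ordinal 3 1 isT))
                       (s (@Ordinal 3 2 isT))).

Definition p0 : player G3 := @Ordinal 3 0 isT.
Definition p1 : player G3 := @Ordinal 3 1 isT.
Definition p2 : player G3 := @Ordinal 3 2 isT.
Definition b0 : 'I_2 := @Ordinal 2 0 isT.
Definition b1 : 'I_2 := @Ordinal 2 1 isT.

Definition prof (a b c : 'I_2) : profile G3 :=
  [ffun p : player G3 => if p == p0 then a else if p == p1 then b else c].

Lemma prof_p0 a b c : prof a b c p0 = a. Proof. by rewrite ffunE. Qed.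
Lemma prof_p1 a b c : prof a b c p1 = b. Proof. by rewrite ffunE. Qed.
Lemma prof_p2 a b c : prof a b c p2 = c. Proof. by rewrite ffunE. Qed.

Lemma gu_prof p a b c : gu p (prof a b c) = payoff p a b c.
Proof. by rewrite /= prof_p0 prof_p1 prof_p2. Qed.

Lemma player_cases (p : player G3) : [\/ p = p0, p = p1 | p = p2].
Proof.
case: p => -[|[|[|//]]] lt3; [constructor 1|constructor 2|constructor 3];
  exact: val_inj.
Qed.

Lemma strategy_cases (a : 'I_2) : a = b0 \/ a = b1.
Proof. by case: a => -[|[|//]] lt2; [left|right]; apply: val_inj. Qed.

Lemma prof_eta (s : profile G3) : s = prof (s p0) (s p1) (s p2).
Proof.
by apply/ffunP => p; rewrite ffunE; case: (player_cases p) => ->.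
Qed.

Lemma deviate_prof (p : player G3) a b c (t : 'I_(gm p)) :
  deviate (prof a b c) t =
  prof (if p == p0 then t else a) (if p == p1 then t else b)
       (if p == p2 then t else c).
Proof.
apply/ffunP => q; rewrite /deviate !ffunE; case: dfwithP => [|q' ne].
  by case: (player_cases p) => ->.
rewrite ffunE; case: (player_cases q') ne => -> ne; case: (player_cases p) ne => -> //.
Qed.

Lemma rsum_prof (f : profile G3 -> R) :
  rsum f = f (prof b0 b0 b0) + f (prof b0 b0 b1) + f (prof b0 b1 b0)
         + f (prof b0 b1 b1) + f (prof b1 b0 b0) + f (prof b1 b0 b1)
         + f (prof b1 b1 b0) + f (prof b1 b1 b1).
Proof.
pose prof3 (abc : 'I_2 * 'I_2 * 'I_2) := prof abc.1.1 abc.1.2 abc.2.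
rewrite /rsum (reindex prof3) /=.
  rewrite -(pair_bigA _ (fun (ab : 'I_2 * 'I_2) c => f (prof ab.1 ab.2 c))).
  rewrite -(pair_bigA _ (fun a b => \big[Rplus/R0]_c f (prof a b c))) /=.
  rewrite !big_ord_recl !big_ord0 /=.
  have -> : lift ord0 ord0 = b1 by apply: val_inj.
  have -> : ord0 = b0 by apply: val_inj.
  lra.
exists (fun s : profile G3 => (s p0, s p1, s p2)) => [[[a b] c]|s] _.
  by rewrite /prof3 prof_p0 prof_p1 prof_p2.
by rewrite /prof3 -prof_eta.
Qed.

Lemma strategy1_weakly_dominated (p : player G3) :
  weakly_dominates (b0 : 'I_(gm p)) b1.
Proof.
move=> s; rewrite [s]prof_eta deviate_prof !gu_prof.
move: (s p0) (s p1) (s p2) => a b c.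
by case: (player_cases p) => ->; rewrite ?prof_p0 ?prof_p1 ?prof_p2 => -> /=;
  move: a b c; do 3!case=> -[|[|//]] ? /=; lra.
Qed.

Lemma inCE_strategy1_weight0 (P : {set player G3}) x (p : player G3) (s : profile G3) :
  inCE P x -> p \in P -> s p = b1 ->
  gu p s < gu p (deviate s (b0 : 'I_(gm p))) -> x s = 0.
Proof.
move=> ce pP; have b10 : (b1 : 'I_(gm p)) <> b0 by move/(congr1 val).
exact: (inCE_dominated_weight0 ce pP b10 (@strategy1_weakly_dominated p)).
Qed.

Lemma inCE_support_p0 (P : {set player G3}) x : inCE P x -> p0 \in P ->
  [/\ x (prof b1 b0 b0) = 0, x (prof b1 b1 b0) = 0 & x (prof b1 b1 b1) = 0].
Proof.
by move=> ce pP; split; apply: (inCE_strategy1_weight0 ce pP);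
  rewrite ?prof_p0 // deviate_prof !gu_prof /=; lra.
Qed.

Lemma inCE_support_p1 (P : {set player G3}) x : inCE P x -> p1 \in P ->
  [/\ x (prof b0 b1 b0) = 0, x (prof b1 b1 b0) = 0 & x (prof b1 b1 b1) = 0].
Proof.
by move=> ce pP; split; apply: (inCE_strategy1_weight0 ce pP);
  rewrite ?prof_p1 // deviate_prof !gu_prof /=; lra.
Qed.

Lemma inCE_support_p2 (P : {set player G3}) x : inCE P x -> p2 \in P ->
  [/\ x (prof b0 b0 b1) = 0, x (prof b0 b1 b1) = 0, x (prof b1 b0 b1) = 0
    & x (prof b1 b1 b1) = 0].
Proof.
by move=> ce pP; split; apply: (inCE_strategy1_weight0 ce pP);
  rewrite ?prof_p2 // deviate_prof !gu_prof /=; lra.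
Qed.

Lemma dist_prof x : is_dist x ->
  x (prof b0 b0 b0) + x (prof b0 b0 b1) + x (prof b0 b1 b0) + x (prof b0 b1 b1)
  + x (prof b1 b0 b0) + x (prof b1 b0 b1) + x (prof b1 b1 b0) + x (prof b1 b1 b1)
  = 1.
Proof. by case=> _; rewrite rsum_prof. Qed.

Lemma eutil_p0 x : eutil p0 x =
  x (prof b0 b0 b0) - x (prof b0 b1 b0) + x (prof b0 b1 b1)
  - 2 * x (prof b1 b1 b0) - x (prof b1 b1 b1).
Proof. by rewrite /eutil rsum_prof !gu_prof /=; lra. Qed.

Lemma eutil_p1 x : eutil p1 x =
  x (prof b0 b0 b0) - x (prof b1 b0 b0) + x (prof b1 b0 b1)
  - 2 * x (prof b1 b1 b0) - x (prof b1 b1 b1).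
Proof. by rewrite /eutil rsum_prof !gu_prof /=; lra. Qed.

Lemma eutil_p2 x : eutil p2 x =
  - x (prof b0 b0 b1) + x (prof b0 b1 b0) + x (prof b1 b0 b0)
  + 11 * x (prof b1 b1 b0) + 10 * x (prof b1 b1 b1).
Proof. by rewrite /eutil rsum_prof !gu_prof /=; lra. Qed.

Lemma eutil1_of_ce0 (P : {set player G3}) x : inCE P x -> p0 \in P ->
  eutil p0 x <= -1 -> eutil p1 x = 0.
Proof.
move=> [x_dist ce] pP; have [z100 z110 z111] := inCE_support_p0 (conj x_dist ce) pP.
have [x_ge0 _] := x_dist; have := dist_prof x_dist.
rewrite eutil_p0 eutil_p1 z100 z110 z111.
move: (x_ge0 (prof b0 b0 b0)) (x_ge0 (prof b0 b0 b1)) (x_ge0 (prof b0 b1 b1))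
  (x_ge0 (prof b1 b0 b1)) => *; lra.
Qed.

Lemma eutil0_of_ce1 (P : {set player G3}) x : inCE P x -> p1 \in P ->
  eutil p1 x <= -1 -> eutil p0 x = 0.
Proof.
move=> [x_dist ce] pP; have [z010 z110 z111] := inCE_support_p1 (conj x_dist ce) pP.
have [x_ge0 _] := x_dist; have := dist_prof x_dist.
rewrite eutil_p0 eutil_p1 z010 z110 z111.
move: (x_ge0 (prof b0 b0 b0)) (x_ge0 (prof b0 b0 b1)) (x_ge0 (prof b0 b1 b1))
  (x_ge0 (prof b1 b0 b1)) => *; lra.
Qed.

Lemma eutil2_of_ce01 (P : {set player G3}) x :
  inCE P x -> p0 \in P -> p1 \in P ->
  eutil p0 x <= 0 -> eutil p1 x <= 0 -> eutil p2 x = -1.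
Proof.
move=> [x_dist ce] pP0 pP1.
have [z100 z110 z111] := inCE_support_p0 (conj x_dist ce) pP0.
have [z010 _ _] := inCE_support_p1 (conj x_dist ce) pP1.
have [x_ge0 _] := x_dist; have := dist_prof x_dist.
rewrite eutil_p0 eutil_p1 eutil_p2 z100 z110 z111 z010.
move: (x_ge0 (prof b0 b0 b0)) (x_ge0 (prof b0 b1 b1)) (x_ge0 (prof b1 b0 b1)).
by move=> *; lra.
Qed.

Lemma eutil2_of_ce012 (P : {set player G3}) x :
  inCE P x -> p0 \in P -> p1 \in P -> p2 \in P -> eutil p2 x = 0.
Proof.
move=> ce pP0 pP1 pP2.
have [z100 z110 z111] := inCE_support_p0 ce pP0.
have [z010 _ _] := inCE_support_p1 ce pP1.
have [z001 z011 z101 _] := inCE_support_p2 ce pP2.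
by rewrite eutil_p2 z001 z010 z100 z110 z111; lra.
Qed.

Lemma welfare_le8 x : is_dist x -> eutil p0 x + eutil p1 x + eutil p2 x <= 8.
Proof.
move=> x_dist; have [x_ge0 _] := x_dist; have := dist_prof x_dist.
rewrite eutil_p0 eutil_p1 eutil_p2.
move: (x_ge0 (prof b0 b0 b0)) (x_ge0 (prof b0 b0 b1)) (x_ge0 (prof b0 b1 b0))
  (x_ge0 (prof b0 b1 b1)) (x_ge0 (prof b1 b0 b0)) (x_ge0 (prof b1 b0 b1))
  (x_ge0 (prof b1 b1 b0)) (x_ge0 (prof b1 b1 b1)) => *; lra.
Qed.

Definition witness_cell (pi : seq (player G3)) : profile G3 :=
  match [seq val p | p <- pi] with
  | [::] => prof b1 b1 b1
  | [:: O] => prof b0 b1 b0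
  | [:: S O] => prof b1 b0 b0
  | [:: O; S O] => prof b0 b1 b1
  | [:: S O; O] => prof b1 b0 b1
  | _ => prof b0 b0 b0
  end.

Definition witness : collection G3 := fun pi => delta (witness_cell pi).

Lemma witness_cell_long (a b c : player G3) pi :
  witness_cell [:: a, b, c & pi] = prof b0 b0 b0.
Proof.
by rewrite /witness_cell /=; case: (val a) => [|[|?]]; case: (val b) => [|[|?]].
Qed.

Lemma best_response_prof (p : player G3) a b c :
  gu p (deviate (prof a b c) (b0 : 'I_(gm p))) <= payoff p a b c ->
  gu p (deviate (prof a b c) (b1 : 'I_(gm p))) <= payoff p a b c ->
  best_response p (prof a b c).
Proof. by move=> dev0 dev1 t; rewrite gu_prof; case: (strategy_cases t) => ->. Qed.

Lemma witness_cell_best_response pi (p : player G3) :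
  p \in pi -> best_response p (witness_cell pi).
Proof.
case: pi => [|a [|b [|c pi]]] //.
- case: (player_cases a) => ->; case: (player_cases p) => -> //= _;
  by apply: best_response_prof; rewrite !deviate_prof !gu_prof /=; lra.
- case: (player_cases a) => ->; case: (player_cases b) => ->;
  case: (player_cases p) => -> //= _;
  by apply: best_response_prof; rewrite !deviate_prof !gu_prof /=; lra.
- move=> _; rewrite witness_cell_long; apply: best_response_prof;
  by case: (player_cases p) => ->; rewrite deviate_prof !gu_prof /=; lra.
Qed.

Lemma witness_cell_stable pi (p : player G3) : p \notin pi ->
  gu p (witness_cell (rcons pi p)) <= gu p (witness_cell pi).
Proof.
case: pi => [|a [|b [|c pi]]].
- by case: (player_cases p) => -> _; rewrite /witness_cell !gu_prof /=; lra.
- case: (player_cases a) => ->; case: (player_cases p) => -> // _;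
  by rewrite /witness_cell !gu_prof /=; lra.
- rewrite [rcons _ _]/= witness_cell_long.
  case: (player_cases a) => ->; case: (player_cases b) => ->;
  case: (player_cases p) => -> // _;
  by rewrite /witness_cell !gu_prof /=; lra.
- by rewrite [rcons _ _]/= !witness_cell_long => _; apply: Rle_refl.
Qed.

Lemma witness_X_PS : X_PS [set: player G3] witness.
Proof.
split=> [pi _|pi _ p _ p_notin].
  rewrite leaders_setT; apply: inCE_delta => p; rewrite inE.
  exact: witness_cell_best_response.
by rewrite /witness !eutil_delta; exact: witness_cell_stable.
Qed.

Lemma witness_SCE_PA : SCE_PA [set: player G3] witness.
Proof.
split; first exact: witness_X_PS.
split; first by exists witness; split; first exact: witness_X_PS.
case=> x [[xX _] [x_ge [p [_ [_ x_gt]]]]].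
have := welfare_le8 (proj1 (xX [::] isT)).
move: (x_ge p0 (in_setT _) isT) (x_ge p1 (in_setT _) isT)
  (x_ge p2 (in_setT _) isT) x_gt.
rewrite /witness !eutil_delta !gu_prof /=.
by case: (player_cases p) => -> /= *; lra.
Qed.

Lemma X_PS_witness_root_order_dependent (x : collection G3) :
  X_PS [set: player G3] x -> x [::] = witness [::] ->
  x [:: p1; p0] <> x [:: p0; p1].
Proof.
move=> [xX xS] root sym.
have ce pi : uniq pi -> inCE [set p in pi] (x pi).
  by move=> pi_uniq; rewrite -leaders_setT; apply: xX; rewrite inPi_setT.
have st pi p :
    uniq pi -> p \notin pi -> eutil p (x (rcons pi p)) <= eutil p (x pi).
  by move=> pi_uniq; apply: xS; rewrite ?inPi_setT ?in_setT.
have u1_p0 : eutil p1 (x [:: p0]) = 0.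
  apply: (eutil1_of_ce0 (ce [:: p0] isT)); first by rewrite inE.
  by have := st [::] p0 isT isT; rewrite root /witness eutil_delta gu_prof.
have u0_p1 : eutil p0 (x [:: p1]) = 0.
  apply: (eutil0_of_ce1 (ce [:: p1] isT)); first by rewrite inE.
  by have := st [::] p1 isT isT; rewrite root /witness eutil_delta gu_prof.
have u2_p01 : eutil p2 (x [:: p0; p1]) = -1.
  apply: (eutil2_of_ce01 (ce [:: p0; p1] isT)); rewrite ?inE ?eqxx ?orbT //.
    by rewrite -sym -u0_p1; exact: (st [:: p1] p0 isT isT).
  by rewrite -u1_p0; exact: (st [:: p0] p1 isT isT).
have := st [:: p0; p1] p2 isT isT.
rewrite u2_p01 (eutil2_of_ce012 (ce [:: p0; p1; p2] isT)) ?inE ?eqxx ?orbT //.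
by move=> ?; lra.
Qed.

Theorem mainTheorem9 :
  exists (G : game) (L : {set player G}) (x : collection G),
    SCE_PA L x /\
    ~ (exists x' : collection G,
         SCE_PA L x' /\ x' [::] = x [::] /\
         forall pi pi', inPi L pi -> inPi L pi' -> pi =i pi' -> x' pi = x' pi').
Proof.
exists G3, [set: player G3], witness; split; first exact: witness_SCE_PA.
case=> x [[x_PS _] [root order_free]].
apply: (X_PS_witness_root_order_dependent x_PS root).
by apply: order_free; rewrite ?inPi_setT // => p; rewrite !inE orbC.
Qed.
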